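(* Let $V=\{1,\#_1,\#_2,0\}$, with constant expressive semantics. There are exactly 167 distinct intersective mixed consequence truth-relations on $V$. Among them: (i) 18 admit a G-conditional (hence also a G-negation, a G-disjunction and a G-conjunction), namely the 16 mixed consequence relations together with $\models_{\{1,\#_1\},\{1,\#_1\}}\cap\models_{\{1,\#_2\},\{1,\#_2\}}$ and $\models_{\{1,\#_1\},\{1,\#_2\}}\cap\models_{\{1,\#_2\},\{1,\#_1\}}$, each of the latter two having a unique G-conditional $\to$, given by: $1\to y=y$ and $0\to y=1$ and $x\to 1=1$ for all $x,y$, and, for the first, $\#_1\to\#_1=1$, $\#_1\to\#_2=\#_2$, $\#_1\to0=\#_2$, $\#_2\to\#_1=\#_1$, $\#_2\to\#_2=1$, $\#_2\to0=\#_1$; for the second, $\#_1\to\#_1=\#_1$, $\#_1\to\#_2=1$, $\#_1\to0=\#_1$, $\#_2\to\#_1=1$, $\#_2\to\#_2=\#_2$, $\#_2\to0=\#_2$. (ii) 28 admit a G-conjunction and a G-disjunction but no G-negation (nor G-conditional). (iii) 27 admit a G-conjunction but no G-disjunction, and 27 others admit a G-disjunction but no G-conjunction (none of these admits a G-negation or G-conditional). (iv) The remaining 67 admit none of G-disjunction, G-conjunction, G-negation, G-conditional.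
   Context: A set of designated values is $\mathcal{D}\subseteq V$ with $1\in\mathcal{D}$, $0\notin\mathcal{D}$. The mixed consequence truth-relation $\models_{\mathcal{D}_p,\mathcal{D}_c}$: $\gamma\models\delta$ iff ($\gamma\subseteq\mathcal{D}_p\Rightarrow\delta\cap\mathcal{D}_c\neq\emptyset$), $\gamma,\delta\subseteq V$; intersective mixed truth-relations are finite intersections of these, and ''distinct'' means distinct as subsets of $\mathcal{P}(V)\times\mathcal{P}(V)$. A semantics: valuations mapping atoms to $V$, connectives interpreted by fixed truth functions, extended compositionally, every assignment to finitely many distinct atoms realized; constant expressive: every value is the constant value of some formula. $\Gamma\vdash\Delta$ iff $v(\Gamma)\models v(\Delta)$ for all $v$; $\Gamma,A=\Gamma\cup\{A\}$. A relation admits a G-connective if some truth function makes a connective satisfy, for all $\Gamma,\Delta,A,B$: G-conjunction: $\Gamma,A\wedge B\vdash\Delta$ iff $\Gamma,A,B\vdash\Delta$; $\Gamma\vdash A\wedge B,\Delta$ iff ($\Gamma\vdash A,\Delta$ and $\Gamma\vdash B,\Delta$). G-disjunction: $\Gamma\vdash A\vee B,\Delta$ iff $\Gamma\vdash A,B,\Delta$; $\Gamma,A\vee B\vdash\Delta$ iff ($\Gamma,A\vdash\Delta$ and $\Gamma,B\vdash\Delta$). G-negation: $\Gamma,\neg A\vdash\Delta$ iff $\Gamma\vdash A,\Delta$; $\Gamma\vdash\neg A,\Delta$ iff $\Gamma,A\vdash\Delta$. G-conditional: $\Gamma\vdash A\to B,\Delta$ iff $\Gamma,A\vdash B,\Delta$;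 $\Gamma,A\to B\vdash\Delta$ iff ($\Gamma\vdash A,\Delta$ and $\Gamma,B\vdash\Delta$). *)

From HB Require Import structures.
From mathcomp Require Import all_boot.
From Stdlib Require Import ClassicalEpsilon.
Set Implicit Arguments. Unset Strict Implicit. Unset Printing Implicit Defensive.

Inductive V : Type := One | H1 | H2 | Zero.

Definition v2o (x : V) : 'I_4 :=
  match x with One => inord 0 | H1 => inord 1 | H2 => inord 2 | Zero => inord 3 end.
Definition o2v (i : 'I_4) : V :=
  match val i with 0 => One | 1 => H1 | 2 => H2 | _ => Zero end.
Lemma v2oK : cancel v2o o2v.
Proof. by case; rewrite /o2v /= inordK. Qed.
HB.instance Definition _ := Equality.copy V (can_type v2oK).
HB.instance Definition _ := Choice.copy V (can_type v2oK).
HB.instance Definition _ := Countable.copy V (can_type v2oK).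
HB.instance Definition _ := Finite.copy V (can_type v2oK).

Definition pb (P : Prop) : bool :=
  if excluded_middle_informative P then true else false.

Definition trel := {set ({set V} * {set V})}.

Definition desig : {set {set V}} := [set D : {set V} | (One \in D) && (Zero \notin D)].

Definition mc (Dp Dc : {set V}) : trel :=
  [set p : {set V} * {set V} | (p.1 \subset Dp) ==> (p.2 :&: Dc != set0)].

Definition mixed_rels : {set trel} :=
  [set mc p.1 p.2 | p in setX desig desig].

Definition icap (P : {set {set V} * {set V}}) : trel :=
  \bigcap_(p in P) mc p.1 p.2.
Definition intersective : {set trel} :=
  [set icap P | P in [set Q in powerset (setX desig desig) | Q != set0]].

Record semantics := Semantics {
  conn : Type;
  arity : conn -> nat;
  interp : forall c : conn, ('I_(arity c) -> V) -> V }.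

Inductive formula (C : Type) (ar : C -> nat) : Type :=
| Atom of nat
| App (c : C) of ('I_(ar c) -> formula ar).
Arguments Atom {C ar}.
Arguments App {C ar}.

Fixpoint eval (C : Type) (ar : C -> nat) (I : forall c, ('I_(ar c) -> V) -> V)
    (v : nat -> V) (A : formula ar) : V :=
  match A with
  | Atom n => v n
  | App c args => I c (fun i => eval I v (args i))
  end.

Definition const_expressive (S : semantics) : Prop :=
  forall x : V, exists A : formula (@arity S), forall v : nat -> V,
    eval (@interp S) v A = x.

(* extension of S by one new connective (None) of arity k *)
Definition ext_ar (S : semantics) (k : nat) (o : option (conn S)) : nat :=
  match o with None => k | Some c => arity c end.

Definition ext_interp (S : semantics) (k : nat) (f : ('I_k -> V) -> V)
  (o : option (conn S)) : ('I_(@ext_ar S k o) -> V) -> V :=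
  match o as o0 return ('I_(@ext_ar S k o0) -> V) -> V with
  | None => f
  | Some c => @interp S c
  end.

Definition eform (S : semantics) (k : nat) := formula (@ext_ar S k).

Definition eeval (S : semantics) (k : nat) (f : ('I_k -> V) -> V)
  (v : nat -> V) (A : eform S k) : V := eval (ext_interp f) v A.

Definition img (S : semantics) (k : nat) (f : ('I_k -> V) -> V)
  (v : nat -> V) (G : eform S k -> Prop) : {set V} :=
  [set x : V | pb (exists A, G A /\ eeval f v A = x)].

Definition derives (S : semantics) (k : nat) (f : ('I_k -> V) -> V) (R : trel)
  (G D : eform S k -> Prop) : Prop :=
  forall v : nat -> V, (img f v G, img f v D) \in R.

Definition addf (T : Type) (G : T -> Prop) (A : T) : T -> Prop :=
  fun B => G B \/ B = A.

Definition un (S : semantics) (A : eform S 1) : eform S 1 :=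
  @App _ (@ext_ar S 1) None (fun _ : 'I_1 => A).
Definition bin (S : semantics) (A B : eform S 2) : eform S 2 :=
  @App _ (@ext_ar S 2) None (fun i : 'I_2 => if val i == 0 then A else B).

Definition tf1 (g : V -> V) : ('I_1 -> V) -> V := fun a => g (a ord0).
Definition tf2 (g : V -> V -> V) : ('I_2 -> V) -> V :=
  fun a => g (a ord0) (a ord_max).

Definition Gconj_fun (S : semantics) (R : trel) (g : V -> V -> V) : Prop :=
  let d := derives (tf2 g) R in
  forall (G D : eform S 2 -> Prop) (A B : eform S 2),
    (d (addf G (bin A B)) D <-> d (addf (addf G A) B) D) /\
    (d G (addf D (bin A B)) <-> d G (addf D A) /\ d G (addf D B)).

Definition Gdisj_fun (S : semantics) (R : trel) (g : V -> V -> V) : Prop :=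
  let d := derives (tf2 g) R in
  forall (G D : eform S 2 -> Prop) (A B : eform S 2),
    (d G (addf D (bin A B)) <-> d G (addf (addf D A) B)) /\
    (d (addf G (bin A B)) D <-> d (addf G A) D /\ d (addf G B) D).

Definition Gneg_fun (S : semantics) (R : trel) (g : V -> V) : Prop :=
  let d := derives (tf1 g) R in
  forall (G D : eform S 1 -> Prop) (A : eform S 1),
    (d (addf G (un A)) D <-> d G (addf D A)) /\
    (d G (addf D (un A)) <-> d (addf G A) D).

Definition Gcond_fun (S : semantics) (R : trel) (g : V -> V -> V) : Prop :=
  let d := derives (tf2 g) R in
  forall (G D : eform S 2 -> Prop) (A B : eform S 2),
    (d G (addf D (bin A B)) <-> d (addf G A) (addf D B)) /\
    (d (addf G (bin A B)) D <-> d G (addf D A) /\ d (addf G B) D).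

Definition admits_conj (S : semantics) (R : trel) := exists g, Gconj_fun S R g.
Definition admits_disj (S : semantics) (R : trel) := exists g, Gdisj_fun S R g.
Definition admits_neg (S : semantics) (R : trel) := exists g, Gneg_fun S R g.
Definition admits_cond (S : semantics) (R : trel) := exists g, Gcond_fun S R g.

Definition R11_22 : trel :=
  mc [set One; H1] [set One; H1] :&: mc [set One; H2] [set One; H2].
Definition R12_21 : trel :=
  mc [set One; H1] [set One; H2] :&: mc [set One; H2] [set One; H1].

Definition cond_a (x y : V) : V :=
  match x, y with
  | One, _ => y
  | Zero, _ => One
  | _, One => One
  | H1, H1 => One | H1, H2 => H2 | H1, Zero => H2
  | H2, H1 => H1 | H2, H2 => One | H2, Zero => H1
  end.
Definition cond_b (x y : V) : V :=
  match x, y with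
  | One, _ => y
  | Zero, _ => One
  | _, One => One
  | H1, H1 => H1 | H1, H2 => One | H1, Zero => H1
  | H2, H1 => One | H2, H2 => H2 | H2, Zero => H2
  end.

(* A designated pair (Dp, Dc) is determined by which of #1, #2 lie in Dp and in Dc.
   Ordered by Dp ⊆ Dp' and Dc' ⊆ Dc, the 16 pairs form a Boolean lattice on which
   (Dp, Dc) ↦ ⊨_{Dp,Dc} is antitone, so an intersection of mixed consequence relations
   only depends on the down-closure of its family.  The down-closure is recovered from the
   relation, because (Dp, V \ Dc) ⊨_{Dp',Dc'} fails exactly when (Dp, Dc) ≤ (Dp', Dc').
   Intersective relations thus correspond to the nonempty down-sets of the Boolean lattice
   with 16 elements: there are 168 - 1 of them (168 is the Dedekind number M(4)).

   Under constant expressivity every value is named by a constant formula, so g is the truth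
   function of a G-connective iff the G-rules hold for sets of values; for conjunction:
   Γ ∪ {g a b} ⊨ Δ iff Γ ∪ {a, b} ⊨ Δ, and Γ ⊨ Δ ∪ {g a b} iff Γ ⊨ Δ ∪ {a} and Γ ⊨ Δ ∪ {b}.
   These finite conditions are decided by computation for each of the 167 relations. *)

From mathcomp Require Import all_boot.
From Stdlib Require Import ClassicalEpsilon FunctionalExtensionality.
Set Implicit Arguments. Unset Strict Implicit. Unset Printing Implicit Defensive.

Local Notation evaluator := (seq V -> seq V -> bool).

Lemma pbP (P : Prop) : reflect P (pb P).
Proof. by rewrite /pb; case: excluded_middle_informative => h; constructor. Qed.

Lemma pbE (P : Prop) (b : bool) : (P <-> b) -> pb P = b.
Proof. by move=> h; apply/pbP/idP => /h. Qed.

Lemma pb_iff (P Q : Prop) : (P <-> Q) -> pb P = pb Q.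
Proof. by move=> h; apply/pbP/pbP => /h. Qed.

Lemma pb_and (P Q : Prop) : pb (P /\ Q) = pb P && pb Q.
Proof. by apply/pbP/andP => -[/pbP h1 /pbP h2]. Qed.

Lemma exists_fun2 (T1 T2 : Type) (U : choiceType) (Q : T1 -> T2 -> pred U) :
  (exists g, forall a b, Q a b (g a b)) <-> (forall a b, exists z, Q a b z).
Proof.
split=> [[g Hg] a b|H]; first by exists (g a b).
by exists (fun a b => xchoose (H a b)) => a b; exact: xchooseP.
Qed.

Lemma exists_fun1 (T : Type) (U : choiceType) (Q : T -> pred U) :
  (exists g, forall a, Q a (g a)) <-> (forall a, exists z, Q a z).
Proof.
split=> [[g Hg] a|H]; first by exists (g a).
by exists (fun a => xchoose (H a)) => a; exact: xchooseP.
Qed.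

Definition seq_union (A : {set V}) (xs : seq V) : {set V} :=
  foldl (fun B x => B :|: [set x]) A xs.

Definition sequent_in (R : trel) (G D : {set V}) (ws vs : seq V) : bool :=
  (seq_union G ws, seq_union D vs) \in R.

(* [ev ws vs] stands for the validity of Γ ∪ ws ⊨ Δ ∪ vs, for fixed sets Γ, Δ of values. *)
Section Rules.
Variable ev : evaluator.

Definition conj_rule (a b z : V) : bool :=
  (ev [:: z] [::] == ev [:: a; b] [::]) && (ev [::] [:: z] == ev [::] [:: a] && ev [::] [:: b]).
Definition disj_rule (a b z : V) : bool :=
  (ev [::] [:: z] == ev [::] [:: a; b]) && (ev [:: z] [::] == ev [:: a] [::] && ev [:: b] [::]).
Definition cond_rule (a b z : V) : bool :=
  (ev [::] [:: z] == ev [:: a] [:: b]) && (ev [:: z] [::] == ev [::] [:: a] && ev [:: b] [::]).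
Definition neg_rule (a z : V) : bool :=
  (ev [:: z] [::] == ev [::] [:: a]) && (ev [::] [:: z] == ev [:: a] [::]).

End Rules.

Lemma eeval_bin (S : semantics) (g : V -> V -> V) v (A B : eform S 2) :
  eeval (tf2 g) v (bin A B) = g (eeval (tf2 g) v A) (eeval (tf2 g) v B).
Proof. by []. Qed.

Lemma eeval_un (S : semantics) (g : V -> V) v (A : eform S 1) :
  eeval (tf1 g) v (un A) = g (eeval (tf1 g) v A).
Proof. by []. Qed.

Section Derivability.
Variables (S : semantics) (k : nat) (f : ('I_k -> V) -> V) (R : trel).

Lemma img_addf v (G : eform S k -> Prop) A :
  img f v (addf G A) = img f v G :|: [set eeval f v A].
Proof.
apply/setP => x; rewrite !inE.
apply/pbP/orP => [[B [[GB|->] <-]]|[/pbP [B [GB <-]]|/eqP ->]].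
- by left; apply/pbP; exists B.
- by right.
- by exists B; split => //; left.
- by exists A; split => //; right.
Qed.

Lemma derives_eq (G D G' D' : eform S k -> Prop) :
  (forall v, ((img f v G, img f v D) \in R) = ((img f v G', img f v D') \in R)) ->
  derives f R G D <-> derives f R G' D'.
Proof. by move=> E; split=> h v; [rewrite -E | rewrite E]. Qed.

Lemma derives_and (G D G1 D1 G2 D2 : eform S k -> Prop) :
  (forall v, ((img f v G, img f v D) \in R) =
     ((img f v G1, img f v D1) \in R) && ((img f v G2, img f v D2) \in R)) ->
  derives f R G D <-> derives f R G1 D1 /\ derives f R G2 D2.
Proof.
move=> E; split=> [h|[h1 h2] v]; last by rewrite E h1 h2.
by split=> v; have := h v; rewrite E => /andP[].
Qed.

Lemma derives_constE (G D : eform S k -> Prop) X Y :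
  (forall v, img f v G = X) -> (forall v, img f v D = Y) ->
  ((X, Y) \in R) = pb (derives f R G D).
Proof.
move=> hG hD; apply/idP/pbP => [h v|/(_ (fun=> One))]; first by rewrite hG hD.
by rewrite hG hD.
Qed.

Lemma img_addf_const (G : eform S k -> Prop) A X x :
  (forall v, img f v G = X) -> (forall v, eeval f v A = x) ->
  forall v, img f v (addf G A) = X :|: [set x].
Proof. by move=> hG hA v; rewrite img_addf hG hA. Qed.

Fixpoint ext_formula (A : formula (@arity S)) : eform S k :=
  match A with
  | Atom n => Atom n
  | App c args => @App _ (@ext_ar S k) (Some c) (fun i => ext_formula (args i))
  end.

Lemma eeval_ext_formula v A : eeval f v (ext_formula A) = eval (@interp S) v A.
Proof.
elim: A => [n|c args IH] //=; rewrite /eeval /=.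
by congr (@interp S c _); apply: functional_extensionality => i; exact: IH.
Qed.

Definition const_ctx (G : {set V}) : eform S k -> Prop :=
  fun A => exists2 x, x \in G & forall v, eeval f v A = x.

Hypothesis HS : const_expressive S.

Lemma const_formula x : exists A : eform S k, forall v, eeval f v A = x.
Proof. by have [A HA] := HS x; exists (ext_formula A) => v; rewrite eeval_ext_formula. Qed.

Lemma img_const_ctx G v : img f v (const_ctx G) = G.
Proof.
apply/setP => x; rewrite inE; apply/pbP/idP => [[A [[y yG hA] <-]]|xG].
  by rewrite hA.
have [A hA] := const_formula x.
by exists A; split; [exists x | apply: hA].
Qed.

End Derivability.

Section Characterization.
Variables (S : semantics) (R : trel).
Hypothesis HS : const_expressive S.

Lemma Gconj_funP g :
  Gconj_fun S R g <-> forall a b G D, conj_rule (sequent_in R G D) a b (g a b).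
Proof.
rewrite /Gconj_fun /=; split=> [H a b G D|H Γ Δ A B].
  have [A hA] := const_formula (tf2 g) HS a; have [B hB] := const_formula (tf2 g) HS b.
  have hAB v : eeval (tf2 g) v (bin A B) = g a b by rewrite eeval_bin hA hB.
  have iG := img_const_ctx (tf2 g) HS G; have iD := img_const_ctx (tf2 g) HS D.
  have [h1 h2] := H (const_ctx (tf2 g) G) (const_ctx (tf2 g) D) A B.
  rewrite /conj_rule /sequent_in /= (derives_constE R (img_addf_const iG hAB) iD).
  rewrite (derives_constE R (img_addf_const (img_addf_const iG hA) hB) iD).
  rewrite (derives_constE R iG (img_addf_const iD hAB)).
  rewrite (derives_constE R iG (img_addf_const iD hA)) (derives_constE R iG (img_addf_const iD hB)).
  by rewrite -pb_and (pb_iff h1) (pb_iff h2) !eqxx.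
have /all_and2 [E1 E2] v := andP (H (eeval (tf2 g) v A) (eeval (tf2 g) v B)
  (img (tf2 g) v Γ) (img (tf2 g) v Δ)).
by split; [apply: derives_eq | apply: derives_and] => v; rewrite !img_addf;
  [exact/eqP/E1 | exact/eqP/E2].
Qed.

Lemma Gdisj_funP g :
  Gdisj_fun S R g <-> forall a b G D, disj_rule (sequent_in R G D) a b (g a b).
Proof.
rewrite /Gdisj_fun /=; split=> [H a b G D|H Γ Δ A B].
  have [A hA] := const_formula (tf2 g) HS a; have [B hB] := const_formula (tf2 g) HS b.
  have hAB v : eeval (tf2 g) v (bin A B) = g a b by rewrite eeval_bin hA hB.
  have iG := img_const_ctx (tf2 g) HS G; have iD := img_const_ctx (tf2 g) HS D.
  have [h1 h2] := H (const_ctx (tf2 g) G) (const_ctx (tf2 g) D) A B.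
  rewrite /disj_rule /sequent_in /= (derives_constE R iG (img_addf_const iD hAB)).
  rewrite (derives_constE R iG (img_addf_const (img_addf_const iD hA) hB)).
  rewrite (derives_constE R (img_addf_const iG hAB) iD).
  rewrite (derives_constE R (img_addf_const iG hA) iD) (derives_constE R (img_addf_const iG hB) iD).
  by rewrite -pb_and (pb_iff h1) (pb_iff h2) !eqxx.
have /all_and2 [E1 E2] v := andP (H (eeval (tf2 g) v A) (eeval (tf2 g) v B)
  (img (tf2 g) v Γ) (img (tf2 g) v Δ)).
by split; [apply: derives_eq | apply: derives_and] => v; rewrite !img_addf;
  [exact/eqP/E1 | exact/eqP/E2].
Qed.

Lemma Gcond_funP g :
  Gcond_fun S R g <-> forall a b G D, cond_rule (sequent_in R G D) a b (g a b).
Proof.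
rewrite /Gcond_fun /=; split=> [H a b G D|H Γ Δ A B].
  have [A hA] := const_formula (tf2 g) HS a; have [B hB] := const_formula (tf2 g) HS b.
  have hAB v : eeval (tf2 g) v (bin A B) = g a b by rewrite eeval_bin hA hB.
  have iG := img_const_ctx (tf2 g) HS G; have iD := img_const_ctx (tf2 g) HS D.
  have [h1 h2] := H (const_ctx (tf2 g) G) (const_ctx (tf2 g) D) A B.
  rewrite /cond_rule /sequent_in /= (derives_constE R iG (img_addf_const iD hAB)).
  rewrite (derives_constE R (img_addf_const iG hA) (img_addf_const iD hB)).
  rewrite (derives_constE R (img_addf_const iG hAB) iD).
  rewrite (derives_constE R iG (img_addf_const iD hA)) (derives_constE R (img_addf_const iG hB) iD).
  by rewrite -pb_and (pb_iff h1) (pb_iff h2) !eqxx.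
have /all_and2 [E1 E2] v := andP (H (eeval (tf2 g) v A) (eeval (tf2 g) v B)
  (img (tf2 g) v Γ) (img (tf2 g) v Δ)).
by split; [apply: derives_eq | apply: derives_and] => v; rewrite !img_addf;
  [exact/eqP/E1 | exact/eqP/E2].
Qed.

Lemma Gneg_funP g :
  Gneg_fun S R g <-> forall a G D, neg_rule (sequent_in R G D) a (g a).
Proof.
rewrite /Gneg_fun /=; split=> [H a G D|H Γ Δ A].
  have [A hA] := const_formula (tf1 g) HS a.
  have hnA v : eeval (tf1 g) v (un A) = g a by rewrite eeval_un hA.
  have iG := img_const_ctx (tf1 g) HS G; have iD := img_const_ctx (tf1 g) HS D.
  have [h1 h2] := H (const_ctx (tf1 g) G) (const_ctx (tf1 g) D) A.
  rewrite /neg_rule /sequent_in /= (derives_constE R (img_addf_const iG hnA) iD).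
  rewrite (derives_constE R iG (img_addf_const iD hA)).
  rewrite (derives_constE R iG (img_addf_const iD hnA)).
  rewrite (derives_constE R (img_addf_const iG hA) iD).
  by rewrite (pb_iff h1) (pb_iff h2) !eqxx.
have /all_and2 [E1 E2] v := andP (H (eeval (tf1 g) v A) (img (tf1 g) v Γ) (img (tf1 g) v Δ)).
by split; apply: derives_eq => v; rewrite !img_addf; [exact/eqP/E1 | exact/eqP/E2].
Qed.

End Characterization.

Definition allV : seq V := [:: One; H1; H2; Zero].
Lemma mem_allV x : x \in allV.
Proof. by case: x; rewrite !inE eqxx ?orbT. Qed.

Definition bset := (bool * bool * bool * bool)%type.

Definition bit (q : bset) (x : V) : bool :=
  match x with One => q.1.1.1 | H1 => q.1.1.2 | H2 => q.1.2 | Zero => q.2 end.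

Definition set_of_bits (q : bset) : {set V} := [set x | bit q x].

Lemma bset_ext (p q : bset) : (forall x, bit p x = bit q x) -> p = q.
Proof.
case: p q => [[[o a] b] z] [[[o' a'] b'] z'] E.
by move: (E One) (E H1) (E H2) (E Zero) => /= -> -> -> ->.
Qed.

Definition bits_of_set (A : {set V}) : bset := (One \in A, H1 \in A, H2 \in A, Zero \in A).

Lemma bits_of_setK : cancel bits_of_set set_of_bits.
Proof. by move=> A; apply/setP => -[]; rewrite inE. Qed.

Definition add_bit (q : bset) (x : V) : bset :=
  match x with
  | One => (true, q.1.1.2, q.1.2, q.2)
  | H1 => (q.1.1.1, true, q.1.2, q.2)
  | H2 => (q.1.1.1, q.1.1.2, true, q.2)
  | Zero => (q.1.1.1, q.1.1.2, q.1.2, true)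
  end.
Definition add_bits : bset -> seq V -> bset := foldl add_bit.

Lemma bit_add_bit q w x : bit (add_bit q w) x = bit q x || (x == w).
Proof.
case: (eqVneq x w) => [->|]; first by case: w; rewrite orbT.
by rewrite orbF; case: w; case: x; rewrite ?eqxx.
Qed.

Lemma bit_add_bits q ws x : bit (add_bits q ws) x = bit q x || (x \in ws).
Proof.
rewrite /add_bits; elim: ws q => [|w ws IH] q /=; first by rewrite orbF.
by rewrite IH bit_add_bit in_cons orbA.
Qed.
Lemma add_bitsE q ws : set_of_bits (add_bits q ws) = seq_union (set_of_bits q) ws.
Proof.
elim/last_ind: ws => [|ws w IH]; first by [].
rewrite /seq_union foldl_rcons -/(seq_union _ _) -IH.
by apply/setP => x; rewrite !inE !bit_add_bits mem_rcons in_cons orbCA (orbC (x == w)).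
Qed.

Definition bsubset (p q : bset) : bool := all (fun x => bit p x ==> bit q x) allV.
Definition bmeet (p q : bset) : bool := has (fun x => bit p x && bit q x) allV.

Lemma bsubsetE p q : bsubset p q = (set_of_bits p \subset set_of_bits q).
Proof.
apply/allP/subsetP => [H x|H x _]; rewrite ?inE; first exact/implyP/H/mem_allV.
by apply/implyP => px; have := H x; rewrite !inE; apply.
Qed.

Lemma bmeetE p q : bmeet p q = (set_of_bits p :&: set_of_bits q != set0).
Proof.
apply/hasP/set0Pn => [[x _ pqx]|[x]]; first by exists x; rewrite !inE.
by rewrite !inE => pqx; exists x; first exact: mem_allV.
Qed.

Definition dpair := ((bool * bool) * (bool * bool))%type.
Definition prem_bits (k : dpair) : bset := (true, k.1.1, k.1.2, false).
Definition concl_bits (k : dpair) : bset := (true, k.2.1, k.2.2, false).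
Definition dsets (k : dpair) : {set V} * {set V} :=
  (set_of_bits (prem_bits k), set_of_bits (concl_bits k)).

Lemma dsets_desig k : dsets k \in setX desig desig.
Proof. by rewrite in_setX !inE. Qed.

Lemma desig_dsets p : p \in setX desig desig -> exists k, p = dsets k.
Proof.
case: p => Dp Dc; rewrite in_setX !inE /= => /andP [/andP [p1 p0] /andP [c1 c0]].
exists ((H1 \in Dp, H2 \in Dp), (H1 \in Dc, H2 \in Dc)).
rewrite -{1}(bits_of_setK Dp) -{1}(bits_of_setK Dc).
by rewrite /dsets /prem_bits /concl_bits /bits_of_set p1 c1 (negbTE p0) (negbTE c0).
Qed.

Definition dle (k j : dpair) : bool :=
  bsubset (prem_bits k) (prem_bits j) && bsubset (concl_bits j) (concl_bits k).

Lemma mcE (Dp Dc : {set V}) G D :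
  ((G, D) \in mc Dp Dc) = (G \subset Dp) ==> (D :&: Dc != set0).
Proof. by rewrite inE. Qed.

Lemma dleE k j : dle k j = ((dsets k).1 \subset (dsets j).1) && ((dsets j).2 \subset (dsets k).2).
Proof. by rewrite /dle !bsubsetE. Qed.

Lemma mc_anti (Dp Dc Dp' Dc' : {set V}) x :
  Dp \subset Dp' -> Dc' \subset Dc -> x \in mc Dp' Dc' -> x \in mc Dp Dc.
Proof.
move=> sDp sDc; rewrite !inE => /implyP H; apply/implyP => /subset_trans/(_ sDp)/H.
exact/subset_neq0/setIS.
Qed.

Lemma mc_separation (Dp Dc Dp' Dc' : {set V}) :
  ((Dp, ~: Dc) \in mc Dp' Dc') = ~~ ((Dp \subset Dp') && (Dc' \subset Dc)).
Proof. by rewrite mcE setI_eq0 disjoints_subset setCS implybE negb_and. Qed.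

Definition bools := [:: true; false].
Definition bpairs := [seq (a, b) | a <- bools, b <- bools].
Definition all_dpairs : seq dpair := [seq (ab, cd) | ab <- bpairs, cd <- bpairs].

Lemma mem_all_dpairs k : k \in all_dpairs.
Proof. by case: k => [[[] []] [[] []]]. Qed.

Lemma dle_refl : reflexive dle.
Proof. by move=> k; rewrite dleE !subxx. Qed.

Definition down (J : seq dpair) : seq dpair := [seq k <- all_dpairs | has (dle k) J].

Lemma mem_down J k : (k \in down J) = has (dle k) J.
Proof. by rewrite mem_filter mem_all_dpairs andbT. Qed.

Definition rel_of (P : seq dpair) : trel := icap (dsets @: [set k in P]).

Lemma in_rel_of P x : (x \in rel_of P) = all (fun k => x \in mc (dsets k).1 (dsets k).2) P.
Proof.
apply/bigcapP/allP => [H k kP|H _ /imsetP [k kP ->]]; last by apply: H; rewrite inE in kP.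
by apply: (H (dsets k)); apply/imsetP; exists k; rewrite ?inE.
Qed.

Lemma rel_of_down J : rel_of (down J) = rel_of J.
Proof.
apply/setP => x; rewrite !in_rel_of; apply/allP/allP => H j jJ.
  by apply: H; rewrite mem_down; apply/hasP; exists j; rewrite ?dle_refl.
move: jJ; rewrite mem_down => /hasP [i iJ]; rewrite dleE => /andP [s1 s2].
exact: mc_anti s1 s2 (H i iJ).
Qed.

Lemma rel_of1 k : rel_of [:: k] = mc (dsets k).1 (dsets k).2.
Proof. by apply/setP => x; rewrite in_rel_of /= andbT. Qed.

Lemma mem_rel_of P k : down P = P ->
  (k \in P) = (((dsets k).1, ~: (dsets k).2) \notin rel_of P).
Proof.
move=> dP; rewrite in_rel_of -has_predC -{1}dP mem_down; apply: eq_has => j.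
by rewrite /= mc_separation negbK dleE.
Qed.

Lemma rel_of_inj P P' : down P = P -> down P' = P' -> rel_of P = rel_of P' -> P = P'.
Proof.
move=> dP dP' E; rewrite -dP -dP'; apply: eq_filter => k.
by rewrite -!mem_down dP dP' !mem_rel_of // E.
Qed.

Fixpoint downsets (J : seq dpair) : seq (seq dpair) :=
  if J is j :: J' then
    let r := downsets J' in undup (r ++ [seq [seq k <- all_dpairs | dle k j || (k \in P)] | P <- r])
  else [:: [::]].

Lemma downsets_complete (p : pred dpair) J :
  [seq k <- all_dpairs | has (fun j => p j && dle k j) J] \in downsets J.
Proof.
elim: J => [|j J IH].
  by rewrite (@eq_filter _ _ pred0) // filter_pred0 mem_seq1.
set r := downsets J.
change (downsets (j :: J)) with
  (undup (r ++ [seq [seq k <- all_dpairs | dle k j || (k \in P)] | P <- r])).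
rewrite mem_undup mem_cat; case pj: (p j).
  apply/orP; right; apply/mapP; eexists; first exact: IH.
  by apply: eq_filter => k; rewrite mem_filter mem_all_dpairs andbT /= pj.
apply/orP; left; congr (_ \in r): IH.
by apply: eq_filter => k; rewrite /= pj.
Qed.

(* Locked, so that unification never starts evaluating the enumeration. *)
Fact families_key : unit. Proof. by []. Qed.
Definition families : seq (seq dpair) :=
  locked_with families_key [seq P <- downsets all_dpairs | P != [::]].
Lemma familiesE : families = [seq P <- downsets all_dpairs | P != [::]].
Proof. exact: unlock. Qed.

Lemma families_down : all (fun P => down P == P) families.
Proof. rewrite familiesE; vm_cast_no_check (erefl true). Qed.

Lemma down_families J : J != [::] -> down J \in families.
Proof.
case: J => // j J _; rewrite familiesE mem_filter; apply/andP; split.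
  have : j \in down (j :: J) by rewrite mem_down /= dle_refl.
  by case: (down _).
suff -> : down (j :: J) =
    [seq k <- all_dpairs | has (fun i => (i \in j :: J) && dle k i) all_dpairs].
  exact: downsets_complete.
apply: eq_filter => k; apply/hasP/hasP => -[i].
  by move=> iJ ki; exists i; rewrite ?iJ ?mem_all_dpairs.
by move=> _ /andP [iJ ki]; exists i.
Qed.

Lemma icap_rel_of (Q : {set {set V} * {set V}}) : Q \subset setX desig desig ->
  icap Q = rel_of [seq k <- all_dpairs | dsets k \in Q].
Proof.
move=> QX; congr icap; apply/setP => p; apply/idP/imsetP => [Qp|[k]].
  have [k pk] := desig_dsets (subsetP QX p Qp).
  by exists k; rewrite // inE mem_filter -pk Qp mem_all_dpairs.
by rewrite inE mem_filter => /andP [Qk _] ->.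
Qed.

Lemma intersectiveE : intersective = [set R in map rel_of families].
Proof.
apply/setP => R; rewrite [in RHS]inE; apply/idP/idP => [/imsetP [Q]|/mapP [P]].
  rewrite inE powersetE => /andP [QX /set0Pn [p Qp]] ->; apply/mapP.
  pose J := [seq k <- all_dpairs | dsets k \in Q].
  exists (down J); last by rewrite rel_of_down icap_rel_of.
  apply: down_families; have [k pk] := desig_dsets (subsetP QX p Qp).
  apply/eqP => J0; suff : k \in J by rewrite J0.
  by rewrite mem_filter -pk Qp mem_all_dpairs.
rewrite familiesE mem_filter => /andP [P0 _] ->; apply/imsetP.
exists (dsets @: [set k in P]) => //; rewrite inE powersetE; apply/andP; split.
  by apply/subsetP => _ /imsetP [k _ ->]; exact: dsets_desig.
case: P P0 => // k P _; apply/set0Pn; exists (dsets k).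
by apply/imsetP; exists k; rewrite // in_set mem_head.
Qed.

Lemma uniq_families : uniq families.
Proof. rewrite familiesE; vm_cast_no_check (erefl true). Qed.

Lemma size_families : size families = 167.
Proof. rewrite familiesE; vm_cast_no_check (erefl 167). Qed.

Lemma rel_of_inj_families : {in families &, injective rel_of}.
Proof.
move=> P P' /(allP families_down) /eqP dP /(allP families_down) /eqP dP'.
exact: rel_of_inj.
Qed.

Lemma card_rel_of s : {subset s <= families} -> uniq s ->
  #|[set R in map rel_of s]| = size s.
Proof.
move=> sF us; rewrite cardsE -(size_map rel_of); apply/card_uniqP.
by rewrite (map_inj_in_uniq (sub_in2 sF rel_of_inj_families)).
Qed.

Lemma card_intersective : #|intersective| = 167.
Proof. by rewrite intersectiveE card_rel_of ?uniq_families ?size_families. Qed.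

Lemma intersective_filterE (pr : pred trel) (fp : pred (seq dpair)) :
  {in families, forall P, pr (rel_of P) = fp P} ->
  [set R in intersective | pr R] = [set R in map rel_of (filter fp families)].
Proof.
move=> E; apply/setP => R; rewrite !inE intersectiveE inE.
apply/andP/mapP => [[/mapP [P PF ->]]|[P]].
  by rewrite E // => fP; exists P; rewrite // mem_filter fP.
by rewrite mem_filter => /andP [fP PF] ->; rewrite E // map_f.
Qed.

Lemma card_intersective_filter (pr : pred trel) (fp : pred (seq dpair)) :
  {in families, forall P, pr (rel_of P) = fp P} ->
  #|[set R in intersective | pr R]| = count fp families.
Proof.
move/intersective_filterE ->; rewrite card_rel_of ?size_filter ?filter_uniq ?uniq_families //.
by move=> P; rewrite mem_filter => /andP [].
Qed.

Definition in_rel_bits (P : seq dpair) (q t : bset) : bool :=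
  all (fun k => bsubset q (prem_bits k) ==> bmeet t (concl_bits k)) P.

Lemma in_rel_bitsE P q t : ((set_of_bits q, set_of_bits t) \in rel_of P) = in_rel_bits P q t.
Proof. by rewrite in_rel_of; apply: eq_all => k; rewrite mcE bsubsetE bmeetE. Qed.

Definition bits_sequent (r : bset -> bset -> bool) (q t : bset) (ws vs : seq V) : bool :=
  r (add_bits q ws) (add_bits t vs).

Lemma sequent_in_bits P q t :
  sequent_in (rel_of P) (set_of_bits q) (set_of_bits t) = bits_sequent (in_rel_bits P) q t.
Proof.
by do 2 apply: functional_extensionality => ?; rewrite /sequent_in -!add_bitsE in_rel_bitsE.
Qed.

Definition norm_prem (q : bset) : bset := (false, q.1.1.2, q.1.2, q.2).
Definition norm_concl (t : bset) : bset := (t.1.1.1, t.1.1.2, t.1.2, false).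

Lemma in_rel_bits_triv P q t : bit q Zero || bit t One -> in_rel_bits P q t.
Proof.
move=> h; apply/allP => k _; rewrite /bsubset /bmeet /=.
by case/orP: h => /= ->; rewrite ?andbF ?implybF ?implybT ?orbT.
Qed.

Lemma in_rel_bits_norm P q t : in_rel_bits P q t = in_rel_bits P (norm_prem q) (norm_concl t).
Proof. by apply: eq_all => k; rewrite /bsubset /bmeet /= !implybT !andbF. Qed.

Lemma bit_norm_prem q x : bit (norm_prem q) x = if x is One then false else bit q x.
Proof. by case: x. Qed.

Lemma bit_norm_concl t x : bit (norm_concl t) x = if x is Zero then false else bit t x.
Proof. by case: x. Qed.

Lemma norm_prem_add_bits q ws :
  norm_prem (add_bits q ws) = norm_prem (add_bits (norm_prem q) ws).
Proof. by apply: bset_ext => x; rewrite !bit_norm_prem !bit_add_bits bit_norm_prem; case: x. Qed.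

Lemma norm_concl_add_bits t vs :
  norm_concl (add_bits t vs) = norm_concl (add_bits (norm_concl t) vs).
Proof. by apply: bset_ext => x; rewrite !bit_norm_concl !bit_add_bits bit_norm_concl; case: x. Qed.

Definition hash_bsets : seq bset := [seq (false, ab.1, ab.2, false) | ab <- bpairs].

Lemma norm_prem_hash q : ~~ bit q Zero -> norm_prem q \in hash_bsets.
Proof. by case: q => [[[? [] ] []] []]. Qed.

Lemma norm_concl_hash t : ~~ bit t One -> norm_concl t \in hash_bsets.
Proof. by case: t => [[[[] [] ] []] ?]. Qed.

Definition holds_on (r : bset -> bset -> bool) (B : pred evaluator) : bool :=
  all (fun q => all (fun t => B (bits_sequent r q t)) hash_bsets) hash_bsets.

(* With 0 on the left or 1 on the right a sequent is valid, and 1 on the left or 0 on the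
   right is irrelevant: it suffices to let Γ and Δ range over subsets of {#1, #2}. *)
Lemma holds_onE P (B : pred evaluator) : B (fun _ _ => true) ->
  holds_on (in_rel_bits P) B = [forall G, forall D, B (sequent_in (rel_of P) G D)].
Proof.
move=> Btriv; apply/allP/forallP => [H G|H q _]; last first.
  by apply/allP => t _; rewrite -sequent_in_bits; exact: (forallP (H _)).
apply/forallP => D; rewrite -(bits_of_setK G) -(bits_of_setK D) sequent_in_bits.
set q := bits_of_set G; set t := bits_of_set D.
have [triv|] := boolP (bit q Zero || bit t One).
  congr (B _): Btriv; do 2 apply: functional_extensionality => ?; apply/esym/in_rel_bits_triv.
  by rewrite !bit_add_bits; case/orP: triv => ->; rewrite ?orbT.
rewrite negb_or => /andP [q0 t1].
have -> : bits_sequent (in_rel_bits P) q t =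
    bits_sequent (in_rel_bits P) (norm_prem q) (norm_concl t).
  apply: functional_extensionality => ws; apply: functional_extensionality => vs.
  rewrite /bits_sequent in_rel_bits_norm norm_prem_add_bits norm_concl_add_bits.
  by rewrite -in_rel_bits_norm.
exact: (allP (H _ (norm_prem_hash q0)) _ (norm_concl_hash t1)).
Qed.

(* The let-bindings make [vm_compute] tabulate [h] once, so that [memo_rel r] is a
   lookup table for [r]. *)
Definition bmemo (A : Type) (f : bool -> A) : bool -> A :=
  let x := f true in let y := f false in fun b => if b then x else y.

Definition memo_bset (A : Type) (h : bset -> A) : bset -> A :=
  let m := bmemo (fun o => bmemo (fun a => bmemo (fun b => bmemo (fun z => h (o, a, b, z))))) in
  fun q => m q.1.1.1 q.1.1.2 q.1.2 q.2.

Definition memo_rel (r : bset -> bset -> bool) : bset -> bset -> bool :=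
  memo_bset (fun q => memo_bset (r q)).

Lemma memo_bsetE (A : Type) (h : bset -> A) : memo_bset h =1 h.
Proof. by case=> [[[[] []] []] []]. Qed.

Lemma memo_relE r : memo_rel r = r.
Proof.
apply: functional_extensionality => q; apply: functional_extensionality => t.
by rewrite /memo_rel memo_bsetE memo_bsetE.
Qed.

Definition admissible2 (rule : evaluator -> V -> V -> V -> bool)
    (P : seq dpair) : bool :=
  let r := memo_rel (in_rel_bits P) in
  all (fun a => all (fun b => has (fun z => holds_on r (fun ev => rule ev a b z)) allV) allV) allV.

Definition admissible1 (rule : evaluator -> V -> V -> bool)
    (P : seq dpair) : bool :=
  let r := memo_rel (in_rel_bits P) in
  all (fun a => has (fun z => holds_on r (fun ev => rule ev a z)) allV) allV.

Lemma admissible2P (rule : evaluator -> V -> V -> V -> bool) P :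
  (forall a b z, rule (fun _ _ => true) a b z) ->
  (exists g, forall a b G D, rule (sequent_in (rel_of P) G D) a b (g a b)) <-> admissible2 rule P.
Proof.
move=> triv; rewrite /admissible2 memo_relE.
transitivity (forall a b, exists z, holds_on (in_rel_bits P) (fun ev => rule ev a b z)).
  rewrite -exists_fun2; split=> -[g Hg]; exists g => a b.
    by rewrite holds_onE //; apply/forallP => G; apply/forallP => D; apply: Hg.
  by move=> G D; move: (Hg a b); rewrite holds_onE // => /forallP/(_ G)/forallP; apply.
split=> [H|H a b].
  apply/allP => a _; apply/allP => b _; have [z hz] := H a b.
  by apply/hasP; exists z; rewrite ?mem_allV.
by have /hasP [z _ hz] := allP (allP H a (mem_allV a)) b (mem_allV b); exists z.
Qed.

Lemma admissible1P (rule : evaluator -> V -> V -> bool) P :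
  (forall a z, rule (fun _ _ => true) a z) ->
  (exists g, forall a G D, rule (sequent_in (rel_of P) G D) a (g a)) <-> admissible1 rule P.
Proof.
move=> triv; rewrite /admissible1 memo_relE.
transitivity (forall a, exists z, holds_on (in_rel_bits P) (fun ev => rule ev a z)).
  rewrite -exists_fun1; split=> -[g Hg]; exists g => a.
    by rewrite holds_onE //; apply/forallP => G; apply/forallP => D; apply: Hg.
  by move=> G D; move: (Hg a); rewrite holds_onE // => /forallP/(_ G)/forallP; apply.
split=> [H|H a].
  by apply/allP => a _; have [z hz] := H a; apply/hasP; exists z; rewrite ?mem_allV.
by have /hasP [z _ hz] := allP H a (mem_allV a); exists z.
Qed.

Section Admissibility.
Variable S : semantics.
Hypothesis HS : const_expressive S.

Lemma admits_conjE P : admits_conj S (rel_of P) <-> admissible2 conj_rule P.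
Proof.
rewrite -admissible2P => [|a b z]; last by rewrite /conj_rule !eqxx.
by split=> -[g /(Gconj_funP _ HS) Hg]; exists g.
Qed.

Lemma admits_disjE P : admits_disj S (rel_of P) <-> admissible2 disj_rule P.
Proof.
rewrite -admissible2P => [|a b z]; last by rewrite /disj_rule !eqxx.
by split=> -[g /(Gdisj_funP _ HS) Hg]; exists g.
Qed.

Lemma admits_condE P : admits_cond S (rel_of P) <-> admissible2 cond_rule P.
Proof.
rewrite -admissible2P => [|a b z]; last by rewrite /cond_rule !eqxx.
by split=> -[g /(Gcond_funP _ HS) Hg]; exists g.
Qed.

Lemma admits_negE P : admits_neg S (rel_of P) <-> admissible1 neg_rule P.
Proof.
rewrite -admissible1P => [|a z]; last by rewrite /neg_rule !eqxx.
by split=> -[g /(Gneg_funP _ HS) Hg]; exists g.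
Qed.

End Admissibility.

Definition has_conj := admissible2 conj_rule.
Definition has_disj := admissible2 disj_rule.
Definition has_cond := admissible2 cond_rule.
Definition has_neg := admissible1 neg_rule.

Definition cond_families : seq (seq dpair) :=
  [seq down [:: k] | k <- all_dpairs] ++
  [:: down [:: ((true, false), (true, false)); ((false, true), (false, true))];
      down [:: ((true, false), (false, true)); ((false, true), (true, false))]].

Lemma perm_cond_families : perm_eq (filter has_cond families) cond_families.
Proof. rewrite familiesE; vm_cast_no_check (erefl true). Qed.

Lemma families_cond_neg_conj_disj :
  all (fun P => (has_cond P ==> has_neg P) && (has_neg P ==> has_conj P && has_disj P)) families.
Proof. rewrite familiesE; vm_cast_no_check (erefl true). Qed.

(* The equality of [V] does not reduce by computation (it goes through [inord]). *)
Definition eqv (x y : V) : bool :=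
  match x, y with One, One | H1, H1 | H2, H2 | Zero, Zero => true | _, _ => false end.

Lemma eqvP x y : reflect (x = y) (eqv x y).
Proof. by case: x; case: y; constructor. Qed.

Lemma eqvE x y : (x == y) = eqv x y.
Proof. exact/eqP/eqvP. Qed.

Lemma R11_22E :
  R11_22 = rel_of (down [:: ((true, false), (true, false)); ((false, true), (false, true))]).
Proof.
rewrite rel_of_down; apply/setP => x; rewrite in_rel_of /= andbT in_setI.
by congr ((x \in mc _ _) && (x \in mc _ _)); apply/setP => -[]; rewrite !inE !eqvE.
Qed.

Lemma R12_21E :
  R12_21 = rel_of (down [:: ((true, false), (false, true)); ((false, true), (true, false))]).
Proof.
rewrite rel_of_down; apply/setP => x; rewrite in_rel_of /= andbT in_setI.
by congr ((x \in mc _ _) && (x \in mc _ _)); apply/setP => -[]; rewrite !inE !eqvE.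
Qed.

Lemma mixed_relsE : mixed_rels = [set R in map rel_of [seq down [:: k] | k <- all_dpairs]].
Proof.
apply/setP => R; rewrite inE -map_comp; apply/idP/idP => [/imsetP [p pX ->]|/mapP [k _ ->]].
  have [k ->] := desig_dsets pX; apply/mapP; exists k; first exact: mem_all_dpairs.
  by rewrite /= rel_of_down rel_of1.
by apply/imsetP; exists (dsets k); rewrite ?dsets_desig //= rel_of_down rel_of1.
Qed.

Definition cond_table (P : seq dpair) (c : V -> V -> V) : bool :=
  all (fun a => all (fun b => all (fun z =>
    holds_on (in_rel_bits P) (fun ev => cond_rule ev a b z) == eqv z (c a b))
  allV) allV) allV.

Lemma Gcond_fun_table S (HS : const_expressive S) P c : cond_table P c ->
  forall g, Gcond_fun S (rel_of P) g <-> g = c.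
Proof.
move=> tab g; rewrite (Gcond_funP _ HS).
have E a b z : [forall G, forall D, cond_rule (sequent_in (rel_of P) G D) a b z] = eqv z (c a b).
  rewrite -(holds_onE P (B := fun ev => cond_rule ev a b z)); last by rewrite /cond_rule !eqxx.
  exact/eqP/(allP (allP (allP tab a (mem_allV a)) b (mem_allV b)) z (mem_allV z)).
split=> [H|-> a b G D].
  apply: functional_extensionality => a; apply: functional_extensionality => b.
  by apply/eqvP; rewrite -E; apply/forallP => G; apply/forallP => D; apply: H.
by move: (E a b (c a b)); rewrite (introT (eqvP _ _) erefl) => /forallP/(_ G)/forallP.
Qed.

Lemma cond_table_a :
  cond_table (down [:: ((true, false), (true, false)); ((false, true), (false, true))]) cond_a.
Proof. vm_cast_no_check (erefl true). Qed.

Lemma cond_table_b :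
  cond_table (down [:: ((true, false), (false, true)); ((false, true), (true, false))]) cond_b.
Proof. vm_cast_no_check (erefl true). Qed.

Section Classification.
Variable S : semantics.
Hypothesis HS : const_expressive S.

Lemma pb_admits_conj P : pb (admits_conj S (rel_of P)) = has_conj P.
Proof. exact/pbE/admits_conjE. Qed.

Lemma pb_admits_disj P : pb (admits_disj S (rel_of P)) = has_disj P.
Proof. exact/pbE/admits_disjE. Qed.

Lemma pb_admits_neg P : pb (admits_neg S (rel_of P)) = has_neg P.
Proof. exact/pbE/admits_negE. Qed.

Lemma pb_admits_cond P : pb (admits_cond S (rel_of P)) = has_cond P.
Proof. exact/pbE/admits_condE. Qed.

Lemma intersectiveP R : R \in intersective -> exists2 P, P \in families & R = rel_of P.
Proof. by rewrite intersectiveE inE => /mapP. Qed.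

Lemma admits_cond_neg R : R \in intersective -> admits_cond S R -> admits_neg S R.
Proof.
case/intersectiveP => P PF -> /(admits_condE HS) hc; apply/(admits_negE HS).
by have /andP [/implyP /(_ hc) hn _] := allP families_cond_neg_conj_disj P PF.
Qed.

Lemma admits_neg_conj_disj R : R \in intersective -> admits_neg S R ->
  admits_conj S R /\ admits_disj S R.
Proof.
case/intersectiveP => P PF -> /(admits_negE HS) hn.
have /andP [_ /implyP /(_ hn) /andP [hc hd]] := allP families_cond_neg_conj_disj P PF.
by split; [apply/(admits_conjE HS) | apply/(admits_disjE HS)].
Qed.

Lemma not_conj_disj_no_neg_cond R : R \in intersective ->
  ~ (admits_conj S R /\ admits_disj S R) -> ~ admits_neg S R /\ ~ admits_cond S R.
Proof.
move=> RI ncd; split=> [/(admits_neg_conj_disj RI)|/(admits_cond_neg RI)] //.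
by move/(admits_neg_conj_disj RI).
Qed.

Lemma admits_cond_set :
  [set R in intersective | pb (admits_cond S R)] = mixed_rels :|: [set R11_22; R12_21].
Proof.
rewrite (@intersective_filterE _ has_cond) => [|P _]; last exact: pb_admits_cond.
apply/setP => R; rewrite mixed_relsE R11_22E R12_21E in_setU !in_set !in_set1.
by rewrite (perm_mem (perm_map rel_of perm_cond_families)) map_cat mem_cat mem_seq2.
Qed.

Lemma card_admits_cond : #|[set R in intersective | pb (admits_cond S R)]| = 18.
Proof.
rewrite (card_intersective_filter (fp := has_cond)) => [|P _]; last exact: pb_admits_cond.
rewrite familiesE; vm_cast_no_check (erefl 18).
Qed.

Lemma card_conj_disj_not_neg :
  #|[set R in intersective | [&& pb (admits_conj S R), pb (admits_disj S R)
                               & ~~ pb (admits_neg S R)]]| = 28.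
Proof.
rewrite (card_intersective_filter (fp := fun P => [&& has_conj P, has_disj P & ~~ has_neg P])).
  by rewrite familiesE; vm_cast_no_check (erefl 28).
by move=> P _; rewrite pb_admits_conj pb_admits_disj pb_admits_neg.
Qed.

Lemma card_conj_not_disj :
  #|[set R in intersective | pb (admits_conj S R) && ~~ pb (admits_disj S R)]| = 27.
Proof.
rewrite (card_intersective_filter (fp := fun P => has_conj P && ~~ has_disj P)).
  by rewrite familiesE; vm_cast_no_check (erefl 27).
by move=> P _; rewrite pb_admits_conj pb_admits_disj.
Qed.

Lemma card_disj_not_conj :
  #|[set R in intersective | pb (admits_disj S R) && ~~ pb (admits_conj S R)]| = 27.
Proof.
rewrite (card_intersective_filter (fp := fun P => has_disj P && ~~ has_conj P)).
  by rewrite familiesE; vm_cast_no_check (erefl 27).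
by move=> P _; rewrite pb_admits_conj pb_admits_disj.
Qed.

Lemma card_not_conj_not_disj :
  #|[set R in intersective | ~~ pb (admits_conj S R) && ~~ pb (admits_disj S R)]| = 67.
Proof.
rewrite (card_intersective_filter (fp := fun P => ~~ has_conj P && ~~ has_disj P)).
  by rewrite familiesE; vm_cast_no_check (erefl 67).
by move=> P _; rewrite pb_admits_conj pb_admits_disj.
Qed.

Lemma Gcond_fun_R11_22 g : Gcond_fun S R11_22 g <-> g = cond_a.
Proof. by rewrite R11_22E; exact: (Gcond_fun_table HS cond_table_a). Qed.

Lemma Gcond_fun_R12_21 g : Gcond_fun S R12_21 g <-> g = cond_b.
Proof. by rewrite R12_21E; exact: (Gcond_fun_table HS cond_table_b). Qed.

End Classification.

Theorem theorem5p1 (S : semantics) (HS : const_expressive S) :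
  #|intersective| = 167
  (* (i) *)
  /\ [set R in intersective | pb (admits_cond S R)]
       = mixed_rels :|: [set R11_22; R12_21]
  /\ #|[set R in intersective | pb (admits_cond S R)]| = 18
  /\ (forall R, R \in intersective -> admits_cond S R ->
        admits_neg S R /\ admits_disj S R /\ admits_conj S R)
  /\ (forall g : V -> V -> V, Gcond_fun S R11_22 g <-> g = cond_a)
  /\ (forall g : V -> V -> V, Gcond_fun S R12_21 g <-> g = cond_b)
  (* (ii) *)
  /\ #|[set R in intersective | [&& pb (admits_conj S R), pb (admits_disj S R)
                                  & ~~ pb (admits_neg S R)]]| = 28
  /\ (forall R, R \in intersective -> admits_conj S R -> admits_disj S R ->
        ~ admits_neg S R -> ~ admits_cond S R)
  (* (iii) *)
  /\ #|[set R in intersective | pb (admits_conj S R) && ~~ pb (admits_disj S R)]| = 27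
  /\ #|[set R in intersective | pb (admits_disj S R) && ~~ pb (admits_conj S R)]| = 27
  /\ (forall R, R \in intersective ->
        (admits_conj S R /\ ~ admits_disj S R \/ admits_disj S R /\ ~ admits_conj S R) ->
        ~ admits_neg S R /\ ~ admits_cond S R)
  (* (iv) *)
  /\ #|[set R in intersective | ~~ pb (admits_conj S R) && ~~ pb (admits_disj S R)]| = 67
  /\ (forall R, R \in intersective -> ~ admits_conj S R -> ~ admits_disj S R ->
        ~ admits_neg S R /\ ~ admits_cond S R).
Proof.
split; first exact: card_intersective.
split; first exact: admits_cond_set.
split; first exact: card_admits_cond.
split.
  move=> R RI /(admits_cond_neg HS RI) hn.
  by have [hc hd] := admits_neg_conj_disj HS RI hn.
split; first exact: Gcond_fun_R11_22.
split; first exact: Gcond_fun_R12_21.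
split; first exact: card_conj_disj_not_neg.
split; first by move=> R RI _ _ hn /(admits_cond_neg HS RI).
split; first exact: card_conj_not_disj.
split; first exact: card_disj_not_conj.
split.
  by move=> R RI [[_ nd]|[_ nc]]; apply: not_conj_disj_no_neg_cond => // -[].
split; first exact: card_not_conj_not_disj.
by move=> R RI nc _; apply: not_conj_disj_no_neg_cond => // -[].
Qed.
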